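(* Let $\mathcal A$ be a $C^*$-algebra with identity $1$, let $\delta\colon\mathcal A\to\mathcal A$ be a $^*$-endomorphism, and let $\delta_{*1},\delta_{*2}$ be two non-degenerate transfer operators for $(\mathcal A,\delta)$. Then $\delta_{*1}(1)=\delta_{*2}(1)$ and $\delta_{*1}(\mathcal A)=\delta_{*2}(\mathcal A)$.
   Context: A transfer operator for $(\mathcal A,\delta)$ is a continuous positive linear map $\delta_*\colon\mathcal A\to\mathcal A$ such that $\delta_*(\delta(a)b)=a\,\delta_*(b)$ for all $a,b\in\mathcal A$. A transfer operator $\delta_*$ is called non-degenerate if $\delta(\delta_*(1))=\delta(1)$ (equivalently, $\delta\circ\delta_*\circ\delta=\delta$). *)

From HB Require Import structures.
From mathcomp Require Import all_boot all_order all_algebra.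
From mathcomp Require Import complex.
From mathcomp Require Import reals.
Set Implicit Arguments. Unset Strict Implicit. Unset Printing Implicit Defensive.
Import Order.TTheory GRing.Theory Num.Theory.
Local Open Scope ring_scope.

Record cstar_algebra (R : realType) (A : algType R[i]) := CStarAlgebra {
  star : A -> A;
  cnorm : A -> R;
  starK : forall a, star (star a) = a;
  starD : forall a b, star (a + b) = star a + star b;
  starZ : forall (c : R[i]) a, star (c *: a) = (Num.conj c) *: star a;
  starM : forall a b, star (a * b) = star b * star a;
  cnorm_ge0 : forall a, 0 <= cnorm a;
  cnorm_eq0 : forall a, cnorm a = 0 -> a = 0;
  cnormD : forall a b, cnorm (a + b) <= cnorm a + cnorm b;
  cnormZ : forall (c : R[i]) a, ((cnorm (c *: a))%:C)%C = `|c| * ((cnorm a)%:C)%C;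
  cnormM : forall a b, cnorm (a * b) <= cnorm a * cnorm b;
  cnorm_cstar : forall a, cnorm (star a * a) = cnorm a ^+ 2;
  cnorm_complete : forall u : nat -> A,
    (forall e : R, 0 < e -> exists N : nat, forall m n : nat,
        (N <= m)%N -> (N <= n)%N -> cnorm (u m - u n) < e) ->
    exists l : A, forall e : R, 0 < e -> exists N : nat, forall n : nat,
        (N <= n)%N -> cnorm (u n - l) < e
}.

Section Defs.
Variables (R : realType) (A : algType R[i]) (S : cstar_algebra A).

Definition clinear (f : A -> A) : Prop :=
  (forall a b, f (a + b) = f a + f b) /\ (forall (c : R[i]) a, f (c *: a) = c *: f a).

Definition ccontinuous (f : A -> A) : Prop :=
  forall a (e : R), 0 < e -> exists2 d : R, 0 < d &
    forall b, cnorm S (b - a) < d -> cnorm S (f b - f a) < e.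

Definition cpositive (a : A) : Prop := exists b, a = star S b * b.

Definition positive_map (f : A -> A) : Prop :=
  forall a, cpositive a -> cpositive (f a).

Definition star_endomorphism (d : A -> A) : Prop :=
  [/\ clinear d, (forall a b, d (a * b) = d a * d b) &
      (forall a, d (star S a) = star S (d a))].

Definition transfer_operator (d ds : A -> A) : Prop :=
  [/\ ccontinuous ds, positive_map ds, clinear ds &
      forall a b, ds (d a * b) = a * ds b].

Definition nondegenerate_transfer (d ds : A -> A) : Prop := d (ds 1) = d 1.

End Defs.

From HB Require Import structures.
From mathcomp Require Import all_boot all_order all_algebra.
From mathcomp Require Import complex.
From mathcomp Require Import reals.
Import Order.TTheory GRing.Theory Num.Theory.
Local Open Scope ring_scope.

(* Write e = δ_*(1).  A positive linear map commutes with the involution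
   (polarization: every element is a combination of self-adjoint ones, and
   4h = (h+1)^2 - (h-1)^2 for self-adjoint h), so e is self-adjoint.
   Non-degeneracy gives e δ_*(a) = δ_*(δ(e) a) = δ_*(δ(1) a) = δ_*(a), hence
   also δ_*(a) e = δ_*(a).  For two non-degenerate transfer operators the same
   computation gives e1 e2 = e2 and e2 e1 = e1, and taking adjoints e1 = e2.
   Then δ_*1(a) = δ_*1(a) e2 = δ_*2(δ(δ_*1(a))), and symmetrically. *)

Lemma pmulrn_lmodI (F : numFieldType) (V : lmodType F) n :
  (0 < n)%N -> injective (fun v : V => v *+ n).
Proof.
move=> n_gt0 u v /(congr1 (fun w => n%:R^-1 *: w)) /=.
by rewrite -!scaler_nat !scalerA mulVf ?pnatr_eq0 -?lt0n // !scale1r.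
Qed.

Section StarAlgebra.
Context {R : realType} {A : algType R[i]} {S : cstar_algebra A}.
Local Notation st := (star S).

Lemma starN a : st (- a) = - st a.
Proof. by rewrite -scaleN1r starZ conjCN1 scaleN1r. Qed.

Lemma starB a b : st (a - b) = st a - st b.
Proof. by rewrite starD starN. Qed.

HB.instance Definition _ := GRing.isZmodMorphism.Build A A st starB.

Lemma star1 : st 1 = 1.
Proof.
by rewrite -[st 1]mulr1 -[X in st 1 * X](starK S) -starM mulr1 starK.
Qed.

Lemma selfadjoint_absorb_eq p q :
  st p = p -> st q = q -> p * q = q -> q * p = p -> p = q.
Proof.
by move=> p_sa q_sa pq qp; rewrite -[LHS]p_sa -qp starM p_sa q_sa pq.
Qed.

Section PositiveMap.
Variable ds : A -> A.
Hypotheses (ds_lin : clinear ds) (ds_pos : positive_map S ds).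

HB.instance Definition _ :=
  GRing.isSemilinear.Build R[i] A A *:%R ds (ds_lin.2, ds_lin.1).

Lemma positive_map_star_pos p : cpositive S p -> st (ds p) = ds p.
Proof. by move=> /ds_pos [b ->]; rewrite starM starK. Qed.

Lemma positive_map_star_selfadjoint h : st h = h -> st (ds h) = ds h.
Proof.
move=> h_sa.
have sq_pos c : st c = c -> cpositive S ((h + c) ^+ 2).
  by move=> c_sa; exists (h + c); rewrite expr2 starD h_sa c_sa.
have polar : (h + 1) ^+ 2 - (h - 1) ^+ 2 = h *+ 4.
  by rewrite sqrrD1 sqrrB1 opprD addrA [_ - 1]addrAC addrK [h ^+ 2 + _]addrC
             addrKA opprK -mulrnDr.
apply: (@pmulrn_lmodI _ A 4) => //=.
rewrite -!raddfMn -polar !raddfB /= !positive_map_star_pos //.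
  by apply: sq_pos; rewrite starN star1.
by apply: sq_pos; rewrite star1.
Qed.

Lemma positive_map_star a : st (ds a) = ds (st a).
Proof.
pose h := a + st a; pose k := 'i *: (st a - a).
have h_sa : st h = h by rewrite starD starK addrC.
have k_sa : st k = k by rewrite starZ conjCi starB starK scaleNr -scalerN opprB.
have a2 : h + 'i *: k = a *+ 2.
  by rewrite /h /k scalerA mulCii scaleN1r opprB addrACA subrr addr0 mulr2n.
have sa2 : h - 'i *: k = st a *+ 2.
  rewrite /h /k scalerA mulCii scaleN1r opprK [a + _]addrC addrACA.
  by rewrite subrr addr0 mulr2n.
clearbody h k.
apply: (@pmulrn_lmodI _ A 2) => //=.
rewrite -[RHS]raddfMn -sa2 -[LHS]raddfMn -[ds a *+ 2]raddfMn -a2.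
rewrite raddfD raddfB /= !linearZ /= starD starZ conjCi.
by rewrite !positive_map_star_selfadjoint // scaleNr scalerN.
Qed.

End PositiveMap.

Section TransferOperator.
Context {delta ds : A -> A}.
Hypothesis ds_transfer : transfer_operator S delta ds.

Lemma transfer_delta a : ds (delta a) = a * ds 1.
Proof. by case: ds_transfer => _ _ _ ds_mod; rewrite -ds_mod mulr1. Qed.

Lemma transfer_unit_selfadjoint : st (ds 1) = ds 1.
Proof.
case: ds_transfer => _ ds_pos ds_lin _.
exact: positive_map_star_selfadjoint star1.
Qed.

Lemma nondegenerate_unit_mull {ds'} :
  nondegenerate_transfer delta ds' -> forall a, ds' 1 * ds a = ds a.
Proof.
by case: ds_transfer => _ _ _ ds_mod nd a; rewrite -ds_mod nd ds_mod mul1r.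
Qed.

Lemma nondegenerate_unit_mulr a :
  nondegenerate_transfer delta ds -> ds a * ds 1 = ds a.
Proof.
case: ds_transfer => _ ds_pos ds_lin _ nd.
apply: (can_inj (starK S)).
rewrite starM transfer_unit_selfadjoint positive_map_star //.
exact: nondegenerate_unit_mull.
Qed.

End TransferOperator.

Lemma transfer_range_sub {delta ds ds'} :
  transfer_operator S delta ds -> nondegenerate_transfer delta ds ->
  transfer_operator S delta ds' -> ds' 1 = ds 1 ->
  forall a, ds' (delta (ds a)) = ds a.
Proof.
move=> tr nd tr' e_eq a.
by rewrite (transfer_delta tr') e_eq (nondegenerate_unit_mulr tr).
Qed.

End StarAlgebra.

Theorem proposition5 (R : realType) (A : algType R[i]) (S : cstar_algebra A)
  (delta ds1 ds2 : A -> A) :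
  star_endomorphism S delta ->
  transfer_operator S delta ds1 -> nondegenerate_transfer delta ds1 ->
  transfer_operator S delta ds2 -> nondegenerate_transfer delta ds2 ->
  ds1 1 = ds2 1 /\
  (forall x : A, (exists a, ds1 a = x) <-> (exists a, ds2 a = x)).
Proof.
move=> _ T1 N1 T2 N2.
have e_eq : ds1 1 = ds2 1.
  apply: (selfadjoint_absorb_eq _ _ (transfer_unit_selfadjoint T1)
                                    (transfer_unit_selfadjoint T2)).
    exact: (nondegenerate_unit_mull T2 N1).
  exact: (nondegenerate_unit_mull T1 N2).
split=> // x; split=> -[a <-].
  by exists (delta (ds1 a)); rewrite (transfer_range_sub T1 N1 T2 (esym e_eq)).
by exists (delta (ds2 a)); rewrite (transfer_range_sub T2 N2 T1 e_eq).
Qed.
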